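(* Let $\mathcal B_1$ and $\mathcal B_2$ be real normed spaces, and let $U_1\subset\mathcal B_1$ and $U_2\subset\mathcal B_2$ be non-empty open subsets. Suppose that $\mathcal T:U_1\to U_2$ is a surjective isometry, i.e. $\|\mathcal T(u)-\mathcal T(v)\|=\|u-v\|$ for all $u,v\in U_1$ and $\mathcal T(U_1)=U_2$. If $f,g\in U_1$ satisfy $(1-r)f+rg\in U_1$ for every $r$ with $0\le r\le 1$, then \[ \mathcal T\left(\frac{f+g}{2}\right)=\frac{\mathcal T(f)+\mathcal T(g)}{2}. \]
   Context: No additional context is needed beyond the statement; $\mathcal T$ is not assumed to be linear or affine. *)

From Stdlib Require Import Reals.
Open Scope R_scope.

Record NormedSpace := {
  ns_car :> Type;
  ns_zero : ns_car;
  ns_add : ns_car -> ns_car -> ns_car;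
  ns_opp : ns_car -> ns_car;
  ns_scal : R -> ns_car -> ns_car;
  ns_norm : ns_car -> R;
  ns_addA : forall x y z, ns_add x (ns_add y z) = ns_add (ns_add x y) z;
  ns_addC : forall x y, ns_add x y = ns_add y x;
  ns_add0 : forall x, ns_add ns_zero x = x;
  ns_addN : forall x, ns_add (ns_opp x) x = ns_zero;
  ns_scalA : forall a b x, ns_scal a (ns_scal b x) = ns_scal (a * b) x;
  ns_scal1 : forall x, ns_scal 1 x = x;
  ns_scalDr : forall a x y, ns_scal a (ns_add x y) = ns_add (ns_scal a x) (ns_scal a y);
  ns_scalDl : forall a b x, ns_scal (a + b) x = ns_add (ns_scal a x) (ns_scal b x);
  ns_norm_eq0 : forall x, ns_norm x = 0 -> x = ns_zero;
  ns_normZ : forall a x, ns_norm (ns_scal a x) = Rabs a * ns_norm x;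
  ns_normD : forall x y, ns_norm (ns_add x y) <= ns_norm x + ns_norm y
}.

Arguments ns_zero {_}.
Arguments ns_add {_} _ _.
Arguments ns_opp {_} _.
Arguments ns_scal {_} _ _.
Arguments ns_norm {_} _.

Definition ns_sub {V : NormedSpace} (x y : V) : V := ns_add x (ns_opp y).

Definition is_open {V : NormedSpace} (U : V -> Prop) : Prop :=
  forall x, U x -> exists eps, 0 < eps /\ forall y, ns_norm (ns_sub y x) < eps -> U y.

(* The proof follows Väisälä's proof of the Mazur–Ulam theorem, localised.
   1. For a, b in a normed space let midset a b be the set of metric midpoints
      (points at distance |a - b|/2 from both a and b), and refl a b the point
      reflection x |-> a + b - x, an isometric involution of midset a b fixing
      mid a b.  If h is an isometric bijection of midset a b, conjugating h by
      refl doubles its displacement at mid a b while every displacement stays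
      below the diameter |a - b|; hence h fixes mid a b.  Consequently any
      isometric bijection midset a b -> midset a' b' maps mid a b to mid a' b'.
   2. If the balls of radius eps around a and T a lie in U1 and U2 and
      |b - a| < eps, then T restricts to such a bijection, so T preserves the
      midpoint of a and b.
   3. Compactness of [0, 1] (a supremum argument) gives one radius eps that
      works along the whole segment from f to g.
   4. Subdividing [f, g] into 2N steps shorter than eps, the images of the grid
      points satisfy the midpoint relation on consecutive triples, hence form an
      arithmetic progression; its middle term is the midpoint of T f and T g. *)

From Stdlib Require Import Reals Lra Lia ClassicalEpsilon Classical.
Open Scope R_scope.

Section VectorIdentities.
Variable V : NormedSpace.

Lemma add_zero (x : V) : ns_add x ns_zero = x.
Proof. rewrite ns_addC; apply ns_add0. Qed.

Lemma scal_zero (x : V) : ns_scal 0 x = ns_zero.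
Proof.
  assert (Hdouble : ns_scal 0 x = ns_add (ns_scal 0 x) (ns_scal 0 x)).
  { rewrite <- ns_scalDl; f_equal; ring. }
  rewrite <- (ns_add0 V (ns_scal 0 x)), <- (ns_addN V (ns_scal 0 x)), <- ns_addA.
  rewrite <- Hdouble; reflexivity.
Qed.

Lemma opp_scal (x : V) : ns_opp x = ns_scal (-1) x.
Proof.
  assert (Hcancel : ns_add x (ns_scal (-1) x) = ns_zero).
  { rewrite <- (ns_scal1 V x) at 1; rewrite <- ns_scalDl.
    replace (1 + -1) with 0 by ring; apply scal_zero. }
  rewrite <- (add_zero (ns_opp x)), <- Hcancel, ns_addA, ns_addN, ns_add0.
  reflexivity.
Qed.

End VectorIdentities.

Inductive atom := A0 | A1 | A2 | A3.

Inductive vterm :=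
  | VAtom (i : atom) | VZero | VAdd (s t : vterm) | VOpp (t : vterm)
  | VScal (r : R) (t : vterm).

Fixpoint veval {V : NormedSpace} (env : atom -> V) (t : vterm) : V :=
  match t with
  | VAtom i => env i
  | VZero => ns_zero
  | VAdd s u => ns_add (veval env s) (veval env u)
  | VOpp s => ns_opp (veval env s)
  | VScal r s => ns_scal r (veval env s)
  end.

Definition atom_eqb (i j : atom) : bool :=
  match i, j with
  | A0, A0 | A1, A1 | A2, A2 | A3, A3 => true
  | _, _ => false
  end.

Fixpoint coef (t : vterm) (j : atom) : R :=
  match t with
  | VAtom i => if atom_eqb i j then 1 else 0
  | VZero => 0
  | VAdd s u => coef s j + coef u j
  | VOpp s => -1 * coef s j
  | VScal r s => r * coef s j
  end.

Definition lincomb {V : NormedSpace} (env : atom -> V) (c : atom -> R) : V :=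
  ns_add (ns_scal (c A0) (env A0)) (ns_add (ns_scal (c A1) (env A1))
    (ns_add (ns_scal (c A2) (env A2)) (ns_scal (c A3) (env A3)))).

Lemma add_add_swap (V : NormedSpace) (a b c d : V) :
  ns_add (ns_add a b) (ns_add c d) = ns_add (ns_add a c) (ns_add b d).
Proof.
  rewrite <- !ns_addA; f_equal; rewrite !ns_addA; f_equal; apply ns_addC.
Qed.

Lemma veval_lincomb (V : NormedSpace) (env : atom -> V) (t : vterm) :
  veval env t = lincomb env (coef t).
Proof.
  unfold lincomb; induction t as [i| |s IHs u IHu|s IHs|r s IHs]; simpl.
  - destruct i; simpl; rewrite !scal_zero, ns_scal1, ?add_zero, ?ns_add0; reflexivity.
  - rewrite !scal_zero, !add_zero; reflexivity.
  - rewrite IHs, IHu, !ns_scalDl.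
    rewrite (add_add_swap V (ns_scal (coef s A0) _)), (add_add_swap V (ns_scal (coef s A1) _)),
      (add_add_swap V (ns_scal (coef s A2) _)); reflexivity.
  - rewrite IHs, opp_scal, !ns_scalDr, !ns_scalA; reflexivity.
  - rewrite IHs, !ns_scalDr, !ns_scalA; reflexivity.
Qed.

Lemma veval_coef_eq (V : NormedSpace) (env : atom -> V) (s t : vterm) :
  (forall j, coef s j = coef t j) -> veval env s = veval env t.
Proof. intros Hcoef; rewrite !veval_lincomb; unfold lincomb; rewrite !Hcoef; reflexivity. Qed.

Ltac reify_vterm a0 a1 a2 a3 t :=
  lazymatch t with
  | ns_zero => constr:(VZero)
  | ns_add ?x ?y =>
      let rx := reify_vterm a0 a1 a2 a3 x in
      let ry := reify_vterm a0 a1 a2 a3 y in constr:(VAdd rx ry)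
  | ns_sub ?x ?y =>
      let rx := reify_vterm a0 a1 a2 a3 x in
      let ry := reify_vterm a0 a1 a2 a3 y in constr:(VAdd rx (VOpp ry))
  | ns_opp ?x => let rx := reify_vterm a0 a1 a2 a3 x in constr:(VOpp rx)
  | ns_scal ?r ?x => let rx := reify_vterm a0 a1 a2 a3 x in constr:(VScal r rx)
  | _ =>
      match constr:((a0, a1, a2, a3, t)) with
      | (?x, _, _, _, ?x) => constr:(VAtom A0)
      | (_, ?x, _, _, ?x) => constr:(VAtom A1)
      | (_, _, ?x, _, ?x) => constr:(VAtom A2)
      | (_, _, _, ?x, ?x) => constr:(VAtom A3)
      end
  end.

Ltac vec_eq4 a0 a1 a2 a3 :=
  lazymatch goal with
  | |- @eq _ ?l ?r =>
      let rl := reify_vterm a0 a1 a2 a3 l in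
      let rr := reify_vterm a0 a1 a2 a3 r in
      let env := constr:(fun i : atom =>
        match i with A0 => a0 | A1 => a1 | A2 => a2 | A3 => a3 end) in
      change (veval env rl = veval env rr);
      apply veval_coef_eq; intros []; cbv beta iota delta [coef atom_eqb];
      solve [ring | field; lra]
  end.

Tactic Notation "vec_eq" constr(a) := vec_eq4 a a a a.
Tactic Notation "vec_eq" constr(a) constr(b) := vec_eq4 a b b b.
Tactic Notation "vec_eq" constr(a) constr(b) constr(c) := vec_eq4 a b c c.
Tactic Notation "vec_eq" constr(a) constr(b) constr(c) constr(d) := vec_eq4 a b c d.

Section NormFacts.
Variable V : NormedSpace.

Lemma norm_zero : ns_norm (@ns_zero V) = 0.
Proof. rewrite <- (scal_zero V ns_zero), ns_normZ, Rabs_R0; ring. Qed.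

Lemma norm_opp (x : V) : ns_norm (ns_opp x) = ns_norm x.
Proof. rewrite opp_scal, ns_normZ, Rabs_left by lra; ring. Qed.

Lemma norm_ge0 (x : V) : 0 <= ns_norm x.
Proof.
  assert (Htri := ns_normD V x (ns_opp x)).
  replace (ns_add x (ns_opp x)) with (@ns_zero V) in Htri by vec_eq x.
  rewrite norm_zero, norm_opp in Htri; lra.
Qed.

Lemma dist_sym (x y : V) : ns_norm (ns_sub x y) = ns_norm (ns_sub y x).
Proof. replace (ns_sub x y) with (ns_opp (ns_sub y x)) by vec_eq x y; apply norm_opp. Qed.

Lemma dist_tri (x y z : V) :
  ns_norm (ns_sub x z) <= ns_norm (ns_sub x y) + ns_norm (ns_sub y z).
Proof.
  replace (ns_sub x z) with (ns_add (ns_sub x y) (ns_sub y z)) by vec_eq x y z.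
  apply ns_normD.
Qed.

Lemma dist_self (x : V) : ns_norm (ns_sub x x) = 0.
Proof. replace (ns_sub x x) with (@ns_zero V) by vec_eq x; apply norm_zero. Qed.

Lemma dist_eq0 (x y : V) : ns_norm (ns_sub x y) = 0 -> x = y.
Proof.
  intros Hxy; apply ns_norm_eq0 in Hxy.
  replace x with (ns_add (ns_sub x y) y) by vec_eq x y.
  rewrite Hxy, ns_add0; reflexivity.
Qed.

End NormFacts.

Section MetricMidpoints.
Variable V : NormedSpace.
Implicit Types a b x y : V.

Definition mid a b : V := ns_scal (/ 2) (ns_add a b).

Definition midset a b x : Prop :=
  ns_norm (ns_sub x a) = ns_norm (ns_sub a b) / 2 /\
  ns_norm (ns_sub x b) = ns_norm (ns_sub a b) / 2.

Definition refl a b x : V := ns_sub (ns_add a b) x.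

Lemma refl_invol a b x : refl a b (refl a b x) = x.
Proof. unfold refl; vec_eq a b x. Qed.

Lemma refl_isom a b x y :
  ns_norm (ns_sub (refl a b x) (refl a b y)) = ns_norm (ns_sub x y).
Proof.
  unfold refl.
  replace (ns_sub (ns_sub (ns_add a b) x) (ns_sub (ns_add a b) y)) with (ns_sub y x)
    by vec_eq a b x y.
  apply dist_sym.
Qed.

Lemma refl_mid a b : refl a b (mid a b) = mid a b.
Proof. unfold refl, mid; vec_eq a b. Qed.

Lemma refl_displacement a b x :
  ns_norm (ns_sub (refl a b x) x) = 2 * ns_norm (ns_sub x (mid a b)).
Proof.
  unfold refl, mid.
  replace (ns_sub (ns_sub (ns_add a b) x) x)
    with (ns_scal (-2) (ns_sub x (ns_scal (/ 2) (ns_add a b)))) by vec_eq a b x.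
  rewrite ns_normZ, Rabs_left by lra; ring.
Qed.

Lemma refl_midset a b x : midset a b x -> midset a b (refl a b x).
Proof.
  unfold midset, refl; intros [Hxa Hxb].
  replace (ns_sub (ns_sub (ns_add a b) x) a) with (ns_sub b x) by vec_eq a b x.
  replace (ns_sub (ns_sub (ns_add a b) x) b) with (ns_sub a x) by vec_eq a b x.
  rewrite !(dist_sym V _ x); split; assumption.
Qed.

Lemma mid_midset a b : midset a b (mid a b).
Proof.
  unfold midset, mid.
  replace (ns_sub (ns_scal (/ 2) (ns_add a b)) a) with (ns_scal (/ 2) (ns_sub b a))
    by vec_eq a b.
  replace (ns_sub (ns_scal (/ 2) (ns_add a b)) b) with (ns_scal (/ 2) (ns_sub a b))
    by vec_eq a b.
  rewrite !ns_normZ, Rabs_right, (dist_sym V b a) by lra; split; field.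
Qed.

Lemma midset_diam a b x y : midset a b x -> midset a b y ->
  ns_norm (ns_sub x y) <= ns_norm (ns_sub a b).
Proof.
  intros [Hxa _] [Hya _].
  apply Rle_trans with (ns_norm (ns_sub x a) + ns_norm (ns_sub a y)); [apply dist_tri|].
  rewrite (dist_sym V a y); lra.
Qed.

End MetricMidpoints.

Record isom_bij {V W : NormedSpace} (S : V -> Prop) (S' : W -> Prop)
    (h : V -> W) (k : W -> V) : Prop := {
  ib_maps : forall x, S x -> S' (h x);
  ib_maps_inv : forall y, S' y -> S (k y);
  ib_isom : forall x y, S x -> S y ->
    ns_norm (ns_sub (h x) (h y)) = ns_norm (ns_sub x y);
  ib_cancel : forall x, S x -> k (h x) = x;
  ib_cancel_inv : forall y, S' y -> h (k y) = y
}.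

Arguments ib_maps {V W S S' h k} _ _ _.
Arguments ib_maps_inv {V W S S' h k} _ _ _.
Arguments ib_isom {V W S S' h k} _ _ _ _ _.
Arguments ib_cancel {V W S S' h k} _ _ _.
Arguments ib_cancel_inv {V W S S' h k} _ _ _.

Section IsometricBijections.
Variables V W X : NormedSpace.

Lemma ib_isom_inv (S : V -> Prop) (S' : W -> Prop) h k : isom_bij S S' h k ->
  forall y y', S' y -> S' y' -> ns_norm (ns_sub (k y) (k y')) = ns_norm (ns_sub y y').
Proof.
  intros Hb y y' Hy Hy'.
  rewrite <- (ib_isom Hb) by (apply (ib_maps_inv Hb); assumption).
  rewrite !(ib_cancel_inv Hb) by assumption; reflexivity.
Qed.

Lemma isom_bij_sym (S : V -> Prop) (S' : W -> Prop) h k :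
  isom_bij S S' h k -> isom_bij S' S k h.
Proof.
  intros Hb; split; try apply Hb.
  apply (ib_isom_inv S S' h k Hb).
Qed.

Lemma isom_bij_comp (S : V -> Prop) (S' : W -> Prop) (S'' : X -> Prop) h k h' k' :
  isom_bij S S' h k -> isom_bij S' S'' h' k' ->
  isom_bij S S'' (fun x => h' (h x)) (fun z => k (k' z)).
Proof.
  intros Hb Hb'; split; intros.
  - apply Hb', Hb; assumption.
  - apply Hb, Hb'; assumption.
  - rewrite (ib_isom Hb'), (ib_isom Hb) by (try apply Hb; assumption).
    reflexivity.
  - rewrite (ib_cancel Hb'), (ib_cancel Hb) by (try apply Hb; assumption).
    reflexivity.
  - rewrite (ib_cancel_inv Hb), (ib_cancel_inv Hb')
      by (try apply Hb'; assumption).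
    reflexivity.
Qed.

End IsometricBijections.

Arguments ib_isom_inv {V W S S' h k} _ _ _ _ _.
Arguments isom_bij_sym {V W S S' h k} _.
Arguments isom_bij_comp {V W X S S' S'' h k h' k'} _ _.

Lemma refl_isom_bij (V : NormedSpace) (a b : V) :
  isom_bij (midset V a b) (midset V a b) (refl V a b) (refl V a b).
Proof.
  split; intros; auto using refl_midset, refl_isom, refl_invol.
Qed.

Lemma refl_conjugate (V W : NormedSpace) (a b : V) (a' b' : W) h k :
  isom_bij (midset V a b) (midset W a' b') h k ->
  isom_bij (midset V a b) (midset V a b)
    (fun x => refl V a b (k (refl W a' b' (h x))))
    (fun x => k (refl W a' b' (h (refl V a b x)))).
Proof.
  intros Hb.
  exact (isom_bij_comp
    (isom_bij_comp (isom_bij_comp Hb (refl_isom_bij W a' b')) (isom_bij_sym Hb))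
    (refl_isom_bij V a b)).
Qed.

Lemma doubling_bounded_eq0 (c d : R) : 0 <= c -> (forall n, 2 ^ n * c <= d) -> c = 0.
Proof.
  intros Hc Hbound; destruct (Req_dec c 0) as [|Hne]; [assumption|exfalso].
  destruct (INR_archimed c d) as [n Hn]; [lra|].
  assert (Hpow : 1 + INR n * 1 <= 2 ^ n) by (replace 2 with (1 + 1) by ring; apply poly; lra).
  specialize (Hbound n).
  assert (INR n * c <= 2 ^ n * c) by (apply Rmult_le_compat_r; lra).
  lra.
Qed.

Section Vaisala.
Variable V : NormedSpace.
Variables a b : V.

(* Conjugating h by the reflection (h' = refl ∘ h⁻¹ ∘ refl ∘ h) doubles the
   displacement at the midpoint; iterating, 2^n |h z - z| <= |a - b|. *)
Lemma displacement_doubling_bound (n : nat) : forall h k,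
  isom_bij (midset V a b) (midset V a b) h k ->
  2 ^ n * ns_norm (ns_sub (h (mid V a b)) (mid V a b)) <= ns_norm (ns_sub a b).
Proof.
  set (z := mid V a b).
  assert (Hz : midset V a b z) by apply mid_midset.
  induction n as [|n IHn]; intros h k Hb; simpl.
  - rewrite Rmult_1_l; apply midset_diam; [apply Hb|]; assumption.
  - assert (Hb' := refl_conjugate V V a b a b h k Hb).
    assert (Hdouble : ns_norm (ns_sub (refl V a b (k (refl V a b (h z)))) z)
                      = 2 * ns_norm (ns_sub (h z) z)).
    { assert (Hzfix : refl V a b z = z) by apply refl_mid.
      rewrite <- Hzfix at 2; rewrite refl_isom.
      rewrite <- (ib_cancel Hb z Hz) at 2.
      rewrite (ib_isom_inv Hb) by (try apply refl_midset; apply (ib_maps Hb); assumption).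
      apply refl_displacement. }
    specialize (IHn _ _ Hb'); simpl in IHn; fold z in IHn; rewrite Hdouble in IHn; lra.
Qed.

Lemma isom_bij_fixes_mid h k :
  isom_bij (midset V a b) (midset V a b) h k -> h (mid V a b) = mid V a b.
Proof.
  intros Hb; apply (dist_eq0 V), (doubling_bounded_eq0 _ (ns_norm (ns_sub a b))).
  - apply norm_ge0.
  - intros n; apply (displacement_doubling_bound n h k Hb).
Qed.

End Vaisala.

Lemma midset_mazur_ulam (V W : NormedSpace) (a b : V) (a' b' : W) T Ti :
  isom_bij (midset V a b) (midset W a' b') T Ti -> T (mid V a b) = mid W a' b'.
Proof.
  intros Hb.
  set (z := mid V a b).
  assert (Hz : midset V a b z) by apply mid_midset.
  assert (Hfix := isom_bij_fixes_mid V a b _ _ (refl_conjugate V W a b a' b' T Ti Hb)); simpl in Hfix; fold z in Hfix.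
  assert (HTz : midset W a' b' (refl W a' b' (T z))) by (apply refl_midset, (ib_maps Hb), Hz).
  assert (Hreflz : refl W a' b' (T z) = T z).
  { rewrite <- (ib_cancel_inv Hb _ HTz); f_equal.
    rewrite <- (refl_invol V a b (Ti _)), Hfix; apply refl_mid. }
  unfold refl in Hreflz; unfold mid.
  transitivity (ns_scal (/ 2) (ns_add (ns_sub (ns_add a' b') (T z)) (T z))).
  - rewrite Hreflz; vec_eq (T z).
  - vec_eq a' b' (T z).
Qed.

Lemma lub_approx (E : R -> Prop) (c del : R) : is_lub E c -> 0 < del ->
  exists s, E s /\ c - del < s.
Proof.
  intros [_ Hleast] Hdel; apply NNPP; intros Hnone.
  assert (Hub : is_upper_bound E (c - del)).
  { intros s Hs; apply Rnot_lt_le; intros Hlt; apply Hnone; exists s; split; assumption. }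
  specialize (Hleast _ Hub); lra.
Qed.

Lemma uniform_on_unit_interval (P : R -> R -> Prop) :
  (forall t e e', P t e -> 0 < e' <= e -> P t e') ->
  (forall t, 0 <= t <= 1 -> exists del e, 0 < del /\ 0 < e /\
     forall s, Rabs (s - t) < del -> P s e) ->
  exists e, 0 < e /\ forall t, 0 <= t <= 1 -> P t e.
Proof.
  intros Hmono Hlocal.
  set (E := fun s => 0 <= s <= 1 /\ exists e, 0 < e /\ forall t, 0 <= t <= s -> P t e).
  assert (E0 : E 0).
  { destruct (Hlocal 0) as [del [e [Hdel [He Hnear]]]]; [lra|].
    split; [lra|]; exists e; split; [assumption|].
    intros t Ht; apply Hnear; rewrite Rabs_right; lra. }
  destruct (completeness E) as [c Hc].
  { exists 1; intros s [Hs _]; lra. }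
  { exists 0; exact E0. }
  assert (Hc0 : 0 <= c) by (apply Hc; exact E0).
  assert (Hc1 : c <= 1) by (apply Hc; intros s [Hs _]; lra).
  destruct (Hlocal c) as [del [ec [Hdel [Hec Hnear]]]]; [lra|].
  destruct (lub_approx E c del Hc Hdel) as [s [[Hs [es [Hes Hbelow]]] Hsc]].
  assert (Hsc' : s <= c) by (apply Hc; split; [assumption | exists es; auto]).
  set (c' := Rmin 1 (c + del / 2)).
  assert (Hc'le : c' <= c + del / 2) by apply Rmin_r.
  assert (Ec' : E c').
  { split; [split; [apply Rmin_glb; lra | apply Rmin_l]|].
    exists (Rmin es ec); split; [apply Rmin_pos; assumption|].
    intros t Ht; destruct (Rle_dec t s).
    - apply Hmono with es; [apply Hbelow; lra|].
      split; [apply Rmin_pos; assumption | apply Rmin_l].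
    - apply Hmono with ec; [apply Hnear, Rabs_def1; lra|].
      split; [apply Rmin_pos; assumption | apply Rmin_r]. }
  assert (Hc'c : c' <= c) by (apply Hc; exact Ec').
  assert (Hc'1 : c' = 1).
  { unfold c' in *; unfold Rmin in *; destruct (Rle_dec 1 (c + del / 2)); lra. }
  rewrite Hc'1 in Ec'; destruct Ec' as [_ Hall]; exact Hall.
Qed.

Definition seg {V : NormedSpace} (f g : V) (t : R) : V :=
  ns_add (ns_scal (1 - t) f) (ns_scal t g).

Lemma seg_dist (V : NormedSpace) (f g : V) (t s : R) :
  ns_norm (ns_sub (seg f g t) (seg f g s)) = Rabs (t - s) * ns_norm (ns_sub g f).
Proof. unfold seg; rewrite <- ns_normZ; f_equal; vec_eq f g. Qed.

Section MidpointChains.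
Variable W : NormedSpace.
Variables (q : nat -> W) (n : nat).
Hypothesis hchain : forall k, (S (S k) <= n)%nat -> q (S k) = mid W (q k) (q (S (S k))).

(* Induction on k, carrying the formula for q k and q (k + 1) together. *)
Lemma midpoint_chain_affine k : (k <= n)%nat ->
  q k = ns_add (q 0%nat) (ns_scal (INR k) (ns_sub (q 1%nat) (q 0%nat))).
Proof.
  set (D := ns_sub (q 1%nat) (q 0%nat)).
  enough (Hpair : (k <= n)%nat -> q k = ns_add (q 0%nat) (ns_scal (INR k) D) /\
    ((S k <= n)%nat -> q (S k) = ns_add (q 0%nat) (ns_scal (INR (S k)) D))) by apply Hpair.
  induction k as [|k IHk]; intros Hk.
  - simpl INR; unfold D; split; [|intros _]; vec_eq (q 0%nat) (q 1%nat).
  - destruct IHk as [Hq Hq']; [lia|]; split; [apply Hq'; exact Hk|]; intros Hk'.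
    transitivity (ns_sub (ns_scal 2 (q (S k))) (q k)).
    + rewrite (hchain k Hk'); unfold mid; vec_eq (q k) (q (S (S k))).
    + rewrite Hq, (Hq' Hk), !S_INR; vec_eq (q 0%nat) D.
Qed.

End MidpointChains.

Lemma midpoint_chain (W : NormedSpace) (q : nat -> W) (N : nat) :
  (forall k, (S (S k) <= 2 * N)%nat -> q (S k) = mid W (q k) (q (S (S k)))) ->
  q N = mid W (q 0%nat) (q (2 * N)%nat).
Proof.
  intros Hchain.
  rewrite (midpoint_chain_affine W q (2 * N) Hchain N),
    (midpoint_chain_affine W q (2 * N) Hchain (2 * N)) by lia.
  rewrite mult_INR; simpl (INR 2); unfold mid.
  vec_eq (q 0%nat) (q 1%nat).
Qed.

Section SegmentGrid.
Variable V : NormedSpace.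
Variables (f g : V) (N : nat).
Hypothesis hN : (0 < N)%nat.

Definition grid (k : nat) : V := seg f g (INR k / INR (2 * N)).

Let hNpos : 0 < INR N.
Proof. apply lt_0_INR, hN. Qed.

Lemma grid_param_range k : (k <= 2 * N)%nat -> 0 <= INR k / INR (2 * N) <= 1.
Proof.
  intros Hk; apply le_INR in Hk.
  assert (HM : 0 < INR (2 * N)) by (apply lt_0_INR; lia).
  assert (Hinv := Rinv_0_lt_compat _ HM).
  split; unfold Rdiv.
  - apply Rmult_le_pos; [apply pos_INR | lra].
  - rewrite <- (Rinv_r (INR (2 * N))) by lra; apply Rmult_le_compat_r; lra.
Qed.

Lemma grid_start : grid 0 = f.
Proof.
  pose proof hNpos; unfold grid, seg; rewrite mult_INR; simpl (INR 0); simpl (INR 2).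
  vec_eq f g.
Qed.

Lemma grid_end : grid (2 * N) = g.
Proof. pose proof hNpos; unfold grid, seg; rewrite mult_INR; simpl (INR 2); vec_eq f g. Qed.

Lemma grid_half : grid N = mid V f g.
Proof.
  pose proof hNpos; unfold grid, seg, mid; rewrite mult_INR; simpl (INR 2).
  vec_eq f g.
Qed.

Lemma grid_mid k : grid (S k) = mid V (grid k) (grid (S (S k))).
Proof.
  pose proof hNpos; unfold grid, seg, mid; rewrite !S_INR, mult_INR; simpl (INR 2).
  vec_eq f g.
Qed.

Lemma grid_step_dist k :
  ns_norm (ns_sub (grid (S (S k))) (grid k)) = ns_norm (ns_sub g f) / INR N.
Proof.
  pose proof hNpos; unfold grid; rewrite seg_dist, !S_INR, mult_INR; simpl (INR 2).
  match goal with |- context [Rabs ?step] => replace step with (/ INR N) by (field; lra) end.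
  rewrite Rabs_right; [unfold Rdiv; ring|].
  apply Rle_ge, Rlt_le, Rinv_0_lt_compat; assumption.
Qed.

End SegmentGrid.

Section LocalIsometry.
Variables B1 B2 : NormedSpace.
Variables (U1 : B1 -> Prop) (U2 : B2 -> Prop) (T : B1 -> B2).
Hypothesis hmaps : forall u, U1 u -> U2 (T u).
Hypothesis hsurj : forall w, U2 w -> exists u, U1 u /\ T u = w.
Hypothesis hiso : forall u v, U1 u -> U1 v ->
  ns_norm (ns_sub (T u) (T v)) = ns_norm (ns_sub u v).

Definition T_inv (w : B2) : B1 :=
  epsilon (inhabits ns_zero) (fun u => U1 u /\ T u = w).

Lemma T_inv_spec w : U2 w -> U1 (T_inv w) /\ T (T_inv w) = w.
Proof.
  intros Hw; apply (epsilon_spec (inhabits ns_zero) (fun u => U1 u /\ T u = w)).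
  apply hsurj, Hw.
Qed.

Lemma midset_correspondence a b : U1 a -> U1 b ->
  (forall x, midset B1 a b x -> U1 x) -> (forall w, midset B2 (T a) (T b) w -> U2 w) ->
  isom_bij (midset B1 a b) (midset B2 (T a) (T b)) T T_inv.
Proof.
  intros Ha Hb HS1 HS2.
  assert (Hab : ns_norm (ns_sub (T a) (T b)) = ns_norm (ns_sub a b)) by auto.
  split.
  - intros x Hx; pose proof (HS1 x Hx); unfold midset in *; rewrite !hiso; auto.
  - intros w Hw; destruct (T_inv_spec w (HS2 w Hw)) as [Hu HTu]; unfold midset in *.
    rewrite <- (hiso (T_inv w) a), <- (hiso (T_inv w) b), HTu, <- Hab; auto.
  - intros x y Hx Hy; auto.
  - intros x Hx; destruct (T_inv_spec (T x)) as [Hu HTu]; auto.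
    apply (dist_eq0 B1); rewrite <- hiso, HTu by auto; apply dist_self.
  - intros w Hw; apply T_inv_spec; auto.
Qed.

Definition safe_radius (x : B1) (eps : R) : Prop :=
  (forall y, ns_norm (ns_sub y x) < eps -> U1 y) /\
  (forall w, ns_norm (ns_sub w (T x)) < eps -> U2 w).

Lemma local_midpoint a b eps : safe_radius a eps -> ns_norm (ns_sub b a) < eps ->
  T (mid B1 a b) = mid B2 (T a) (T b).
Proof.
  intros [Hball1 Hball2] Hba.
  assert (Hdist := norm_ge0 B1 (ns_sub b a)).
  assert (Ha : U1 a) by (apply Hball1; rewrite dist_self; lra).
  assert (Hb : U1 b) by auto.
  apply (midset_mazur_ulam _ _ _ _ _ _ T T_inv), midset_correspondence; auto.
  - intros x [Hxa _]; apply Hball1; rewrite Hxa, dist_sym; lra.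
  - intros w [Hwa _]; apply Hball2; rewrite Hwa, hiso, dist_sym by auto; lra.
Qed.

Lemma safe_radius_exists x : is_open U1 -> is_open U2 -> U1 x ->
  exists eps, 0 < eps /\ safe_radius x eps.
Proof.
  intros HU1 HU2 Hx.
  destruct (HU1 x Hx) as [e1 [He1 Hball1]], (HU2 (T x) (hmaps x Hx)) as [e2 [He2 Hball2]].
  exists (Rmin e1 e2); split; [apply Rmin_pos; assumption|].
  pose proof (Rmin_l e1 e2); pose proof (Rmin_r e1 e2).
  split; intros; [apply Hball1 | apply Hball2]; lra.
Qed.

Lemma safe_radius_shift x y eps : safe_radius x eps -> ns_norm (ns_sub y x) < eps / 2 ->
  safe_radius y (eps / 2).
Proof.
  intros [Hball1 Hball2] Hyx.
  assert (Hdist := norm_ge0 B1 (ns_sub y x)).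
  assert (Hx : U1 x) by (apply Hball1; rewrite dist_self; lra).
  assert (Hy : U1 y) by (apply Hball1; lra).
  split.
  - intros z Hz; apply Hball1; pose proof (dist_tri B1 z y x); lra.
  - intros w Hw; apply Hball2; pose proof (dist_tri B2 w (T y) (T x)).
    rewrite hiso in * by assumption; lra.
Qed.

Lemma segment_safe_radius (f g : B1) : is_open U1 -> is_open U2 ->
  (forall r, 0 <= r <= 1 -> U1 (seg f g r)) ->
  exists eps, 0 < eps /\ forall t, 0 <= t <= 1 -> safe_radius (seg f g t) eps.
Proof.
  intros HU1 HU2 Hseg; apply uniform_on_unit_interval.
  - intros t e e' [Hball1 Hball2] He'; split; intros; [apply Hball1 | apply Hball2]; lra.
  - intros t Ht.
    destruct (safe_radius_exists (seg f g t) HU1 HU2 (Hseg t Ht)) as [e [He Hsafe]].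
    set (L := ns_norm (ns_sub g f) + 1).
    assert (HL : 0 < L) by (unfold L; pose proof (norm_ge0 B1 (ns_sub g f)); lra).
    exists (e / (2 * L)), (e / 2); split; [apply Rdiv_lt_0_compat; lra|]; split; [lra|].
    intros s Hs; apply safe_radius_shift with (seg f g t); [exact Hsafe|].
    rewrite seg_dist.
    apply Rle_lt_trans with (Rabs (s - t) * L).
    + apply Rmult_le_compat_l; [apply Rabs_pos | unfold L; lra].
    + apply Rlt_le_trans with (e / (2 * L) * L); [apply Rmult_lt_compat_r; assumption|].
      right; field; lra.
Qed.

End LocalIsometry.

(* Take a safe radius eps valid along [f, g] and N with |g - f| < N eps; the
   images of the 2N-step grid then form a midpoint chain. *)
Theorem lemma2p1 (B1 B2 : NormedSpace) (U1 : B1 -> Prop) (U2 : B2 -> Prop)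
  (T : B1 -> B2)
  (hU1ne : exists x, U1 x) (hU2ne : exists y, U2 y)
  (hU1o : is_open U1) (hU2o : is_open U2)
  (hmaps : forall u, U1 u -> U2 (T u))
  (hsurj : forall w, U2 w -> exists u, U1 u /\ T u = w)
  (hiso : forall u v, U1 u -> U1 v ->
     ns_norm (ns_sub (T u) (T v)) = ns_norm (ns_sub u v))
  (f g : B1) (hf : U1 f) (hg : U1 g)
  (hseg : forall r, 0 <= r <= 1 -> U1 (ns_add (ns_scal (1 - r) f) (ns_scal r g))) :
  T (ns_scal (/ 2) (ns_add f g)) = ns_scal (/ 2) (ns_add (T f) (T g)).
Proof.
  destruct (segment_safe_radius B1 B2 U1 U2 T hmaps hiso f g hU1o hU2o hseg)
    as [eps [Heps Hsafe]].
  destruct (INR_archimed eps (ns_norm (ns_sub g f)) Heps) as [N HN].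
  assert (HNpos : (0 < N)%nat).
  { destruct N; [|lia]; pose proof (norm_ge0 B1 (ns_sub g f)); simpl in HN; lra. }
  assert (Hchain := midpoint_chain B2 (fun k => T (grid B1 f g N k)) N).
  cbv beta in Hchain; rewrite grid_half, grid_start, grid_end in Hchain by exact HNpos.
  apply Hchain; intros k Hk.
  rewrite grid_mid by exact HNpos.
  apply (local_midpoint B1 B2 U1 U2 T hmaps hsurj hiso _ _ eps).
  - apply Hsafe, grid_param_range; [exact HNpos | lia].
  - rewrite grid_step_dist by exact HNpos.
    apply Rmult_lt_reg_r with (INR N); [apply lt_0_INR, HNpos|].
    unfold Rdiv; rewrite Rmult_assoc, Rinv_l by (apply not_0_INR; lia); lra.
Qed.
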